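(* Let $\mathcal X$ be a barreled topological real vector space, $\sigma$ a symplectic form on $\mathcal X$, $\mathcal X_{\rm bulk}\subset\mathcal X$ a linear subspace, $\mathcal X_{\rm bd}$ a topological real vector space, and $\partial:\mathcal X_{\rm bulk}'\to\mathcal X_{\rm bd}'$ a linear map whose restriction to $\mathcal X'$ (each $u\in\mathcal X'$ being regarded as an element of $\mathcal X_{\rm bulk}'$ by restriction to $\mathcal X_{\rm bulk}$) is continuous $\mathcal X'\to\mathcal X_{\rm bd}'$. Let $\eta$ be a symmetric bilinear form on $\mathcal X$ which is strictly positive ($(v\cdot\eta v)>0$ for $v\neq0$) and satisfies $|v_1\cdot\sigma v_2|\le (v_1\cdot\eta v_1)^{1/2}(v_2\cdot\eta v_2)^{1/2}$ for all $v_1,v_2\in\mathcal X$. Let $\mathcal X^{\rm cpl}$ be the real Hilbert space completion of $\mathcal X$ with respect to the inner product $\eta$, with extended inner product $\eta^{\rm cpl}$ (so $\mathcal X\subset\mathcal X^{\rm cpl}$). Assume (Hypothesis 1) that the map $\eta:\mathcal X\to\mathcal X'$, $v\mapsto (w\mapsto w\cdot\eta v)$, is continuous. Then: (i) for every $\tilde u\in\mathcal X^{\rm cpl}$ the functional $\eta^{\rm cpl}\tilde u: v\mapsto (v\cdot\eta^{\rm cpl}\tilde u)$ on $\mathcal X$ belongs to $\mathcal X'$, and for every $f\in\mathcal X_{\rm bd}$ the linear functional $\mathcal X^{\rm cpl}\ni\tilde u\mapsto \big(\partial(\eta^{\rm cpl}\tilde u)\big)(f)$ is continuous; hence there is a unique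 element $\partial' f\in\mathcal X^{\rm cpl}$ with $(\partial'f\cdot\eta^{\rm cpl}\tilde u)=\big(\partial(\eta^{\rm cpl}\tilde u)\big)(f)$ for all $\tilde u\in\mathcal X^{\rm cpl}$, i.e. $\mathrm{Ran}(\partial'\restriction\mathcal X_{\rm bd})\subset\mathcal X^{\rm cpl}$. (ii) If moreover (Hypothesis 2) for every $u\in\mathcal X'$ the condition $\partial u=0$ implies that $u$ vanishes on $\mathcal X_{\rm bulk}$, then $$\big(\{\partial'f: f\in\mathcal X_{\rm bd}\}\big)^{\rm cl}\supset(\mathcal X_{\rm bulk})^{\rm cl},$$ where both closures are taken in the Hilbert space $\mathcal X^{\rm cpl}$.
   Context: For a topological real vector space $\mathcal Y$, $\mathcal Y'$ denotes its continuous dual equipped with the weak$^*$ topology. For a bilinear form $\eta$ on $\mathcal X$, $(v_1\cdot\eta v_2)$ denotes its value on $v_1,v_2$. The map $\partial'$ is the dual of $\partial$; on $\mathcal X_{\rm bd}$ it is understood via the identification in (i). *)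

From HB Require Import structures.
From mathcomp Require Import all_boot all_order all_algebra.
From mathcomp Require Import all_classical all_reals all_analysis.
Set Implicit Arguments. Unset Strict Implicit. Unset Printing Implicit Defensive.
Import Order.TTheory GRing.Theory Num.Theory.
Import numFieldNormedType.Exports.
Local Open Scope classical_set_scope.
Local Open Scope ring_scope.

Section Defs.
Variable R : realType.

Definition lin_fun (V : lmodType R) (u : V -> R) :=
  forall (a : R) (x y : V), u (a *: x + y) = a * u x + u y.

Definition bilinear_form (V : lmodType R) (b : V -> V -> R) :=
  (forall w, lin_fun (fun v => b v w)) /\ (forall v, lin_fun (fun w => b v w)).

Definition symplectic_form (V : lmodType R) (s : V -> V -> R) :=
  [/\ bilinear_form s, (forall v, s v v = 0)
    & (forall v, (forall w, s v w = 0) -> v = 0)].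

Definition lin_subspace (V : lmodType R) (S : set V) :=
  S 0 /\ forall (a : R) x y, S x -> S y -> S (a *: x + y).

Definition in_dual (V : topologicalLmodType R) (u : V -> R) :=
  lin_fun u /\ continuous u.

(* element of the continuous dual S' of a subspace S (subspace topology),
   represented by any function V -> R whose restriction to S is that element *)
Definition in_sub_dual (V : topologicalLmodType R) (S : set V) (u : V -> R) :=
  (forall (a : R) x y, S x -> S y -> u (a *: x + y) = a * u x + u y)
  /\ {within S, continuous u}.

Definition convex_set_ (V : lmodType R) (B : set V) :=
  forall x y (t : R), B x -> B y -> 0 <= t <= 1 -> B (t *: x + (1 - t) *: y).
Definition balanced_set (V : lmodType R) (B : set V) :=
  forall x (a : R), B x -> `|a| <= 1 -> B (a *: x).
Definition absorbing_set (V : lmodType R) (B : set V) :=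
  forall x, exists2 r : R, 0 < r & forall t : R, `|t| <= r -> B (t *: x).
Definition barrel (V : topologicalLmodType R) (B : set V) :=
  [/\ closed B, convex_set_ B, balanced_set B & absorbing_set B].
Definition barreled (V : topologicalLmodType R) :=
  forall B : set V, barrel B -> nbhs (0 : V) B.

(* Continuity of T : V' -> W' (restricted to V'), both duals carrying the
   weak* topology, written out with the basic weak* neighbourhoods. *)
Definition weakstar_continuous_on_dual (V W : topologicalLmodType R)
    (T : (V -> R) -> (W -> R)) :=
  forall u0, in_dual u0 -> forall (G : seq W) (e : R), 0 < e ->
  exists (F : seq V) (d : R), 0 < d /\
    forall u, in_dual u -> (forall v, v \in F -> `|u v - u0 v| < d) ->
      forall f, f \in G -> `|T u f - T u0 f| < e.

(* Continuity of a map J : V -> V' (values in V', weak* topology). *)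
Definition continuous_to_weakstar_dual (V : topologicalLmodType R)
    (J : V -> (V -> R)) :=
  (forall v, in_dual (J v)) /\
  forall (v0 : V) (F : seq V) (e : R), 0 < e ->
    \forall v \near v0, forall w, w \in F -> `|J v w - J v0 w| < e.

Definition hilbert_inner (H : completeNormedModType R) (ip : H -> H -> R) :=
  [/\ bilinear_form ip, (forall x y, ip x y = ip y x)
    & (forall x, ip x x = `|x| ^+ 2)].

Definition is_completion (V : lmodType R) (eta : V -> V -> R)
    (H : completeNormedModType R) (ip : H -> H -> R) (iota : V -> H) :=
  [/\ hilbert_inner ip,
      (forall (a : R) x y, iota (a *: x + y) = a *: iota x + iota y),
      (forall v w, ip (iota v) (iota w) = eta v w)
    & closure (range iota) = setT].

End Defs.

From HB Require Import structures.
From mathcomp Require Import all_boot all_order all_algebra.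
From mathcomp Require Import all_classical all_reals all_analysis.
From mathcomp Require Import ring lra.
Set Implicit Arguments. Unset Strict Implicit. Unset Printing Implicit Defensive.
Import Order.TTheory GRing.Theory Num.Theory.
Import numFieldNormedType.Exports.
Local Open Scope classical_set_scope.
Local Open Scope ring_scope.

(* For ut in the completion, the functional v |-> <iota v, ut> is bounded by 1
   on the polar of {w | `|ut - iota w| < 1}.  That polar is a barrel (closed by
   Hypothesis 1, absorbing by Cauchy-Schwarz), hence a neighbourhood of 0 in
   the barreled space X, so the functional lies in X'.  Composing with the
   weak*-continuous boundary map gives, for each f, a continuous linear
   functional on the completion, represented by the Riesz theorem.  For (ii),
   let w be the component of y in the closure of iota Xbulk orthogonal to the
   range of the adjoint: then the boundary map kills <iota _, w>, so by
   Hypothesis 2 w is orthogonal to iota Xbulk, hence to y, and w = 0. *)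

Section LinFun.
Variables (R : realType) (V : lmodType R) (u : V -> R).
Hypothesis u_lin : lin_fun u.

Lemma lin_fun0 : u 0 = 0.
Proof. by have := u_lin 1 0 0; rewrite scaler0 addr0 mul1r; lra. Qed.

Lemma lin_funZ a x : u (a *: x) = a * u x.
Proof. by rewrite -[a *: x]addr0 u_lin lin_fun0 addr0. Qed.

Lemma lin_funD x y : u (x + y) = u x + u y.
Proof. by rewrite -[x in LHS]scale1r u_lin mul1r. Qed.

Lemma lin_funB x y : u (x - y) = u x - u y.
Proof. by rewrite lin_funD -scaleN1r lin_funZ mulN1r. Qed.

End LinFun.

Lemma closure_sub_preimage (T U : topologicalType) (g : T -> U) (A : set T)
    (D : set U) :
  continuous g -> closed D -> g @` A `<=` D -> closure A `<=` g @^-1` D.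
Proof.
move=> g_cont D_closed gAD x /(closureS (fun a Aa => gAD _ (imageP g Aa))).
exact: preimage_closed (fun y _ => g_cont y) D_closed x.
Qed.

Lemma near_forall_in (T : Type) (F : set_system T) {FF : Filter F} (A : eqType)
    (s : seq A) (P : A -> T -> Prop) :
  (forall a, a \in s -> \forall x \near F, P a x) ->
  \forall x \near F, forall a, a \in s -> P a x.
Proof.
elim: s => [_|a s IH Ps]; first by apply: nearW => x a; rewrite in_nil.
have Ps' := IH (fun b bs => Ps b (mem_behead (bs : b \in behead (a :: s)))).
apply: filterS (filterI (Ps a (mem_head a s)) Ps') => x [Pa Psx] b.
by rewrite in_cons => /predU1P[->|]; [exact: Pa | exact: Psx].
Qed.

Lemma cvg_sqr_norm (R : realType) (V : normedModType R) (T : Type)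
    (F : set_system T) {FF : Filter F} (f : T -> V) (a : V) :
  f @ F --> a -> `|f x| ^+ 2 @[x --> F] --> `|a| ^+ 2.
Proof.
move=> f_a.
apply: (@continuous_cvg _ _ _ _ _ (fun x => `|f x|) (fun r : R => r ^+ 2)).
  exact: exprn_continuous.
exact: cvg_norm.
Qed.

Section InnerProduct.
Variables (R : realType) (H : completeNormedModType R) (ip : H -> H -> R).
Hypothesis ip_hilbert : hilbert_inner ip.

Lemma ipC x y : ip x y = ip y x.
Proof. by case: ip_hilbert. Qed.

Lemma ipxx x : ip x x = `|x| ^+ 2.
Proof. by case: ip_hilbert. Qed.

Lemma ip_lin_l z : lin_fun (ip^~ z).
Proof. by case: ip_hilbert => -[]. Qed.

Lemma ip_lin_r z : lin_fun (ip z).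
Proof. by case: ip_hilbert => -[]. Qed.

Lemma ip0l z : ip 0 z = 0.
Proof. exact: lin_fun0 (ip_lin_l z). Qed.

Lemma ipZl a x z : ip (a *: x) z = a * ip x z.
Proof. exact: (lin_funZ (ip_lin_l z)). Qed.

Lemma ipDl x y z : ip (x + y) z = ip x z + ip y z.
Proof. exact: (lin_funD (ip_lin_l z)). Qed.

Lemma ipBl x y z : ip (x - y) z = ip x z - ip y z.
Proof. exact: (lin_funB (ip_lin_l z)). Qed.

Lemma ip0r z : ip z 0 = 0.
Proof. exact: lin_fun0 (ip_lin_r z). Qed.

Lemma ipZr a x z : ip z (a *: x) = a * ip z x.
Proof. exact: (lin_funZ (ip_lin_r z)). Qed.

Lemma ipDr x y z : ip z (x + y) = ip z x + ip z y.
Proof. exact: (lin_funD (ip_lin_r z)). Qed.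

Lemma ipBr x y z : ip z (x - y) = ip z x - ip z y.
Proof. exact: (lin_funB (ip_lin_r z)). Qed.

Lemma ipxx_eq0 x : (ip x x == 0) = (x == 0).
Proof. by rewrite ipxx sqrf_eq0 normr_eq0. Qed.

Lemma sqr_normD x y : `|x + y| ^+ 2 = `|x| ^+ 2 + 2 * ip x y + `|y| ^+ 2.
Proof. by rewrite -!ipxx ipDl !ipDr (ipC y x); ring. Qed.

Lemma sqr_normB x y : `|x - y| ^+ 2 = `|x| ^+ 2 - 2 * ip x y + `|y| ^+ 2.
Proof. by rewrite -!ipxx ipBl !ipBr (ipC y x); ring. Qed.

Lemma ip_inj x y : (forall z, ip x z = ip y z) -> x = y.
Proof.
move=> ip_xy; apply/eqP; rewrite -subr_eq0 -ipxx_eq0.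
by rewrite ipBl ip_xy subrr.
Qed.

Lemma normr_ip_le x y : `|ip x y| <= `|x| * `|y|.
Proof.
have [/eqP|xy_neq0] := eqVneq (`|x| * `|y|) 0.
  rewrite mulf_eq0 !normr_eq0 => /orP[]/eqP->;
  by rewrite ?ip0l ?ip0r normr0 mulr_ge0.
have xy_gt0 : 0 < `|x| * `|y| by rewrite lt_def xy_neq0 mulr_ge0.
(* apply 2|ip a b| <= |a|^2 + |b|^2 to a = |y| x and b = |x| y *)
have := sqr_normD (`|y| *: x) (`|x| *: y).
have := sqr_normB (`|y| *: x) (`|x| *: y).
rewrite ipZl ipZr !normrZ !normr_id.
have := normr_ge0 (`|y| *: x - `|x| *: y).
have := normr_ge0 (`|y| *: x + `|x| *: y).
rewrite -(ler_pM2l xy_gt0).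
case: (lerP 0 (ip x y)) => [/ger0_norm|/ltr0_norm] ->; nra.
Qed.

Lemma ip_continuous x : continuous (ip x).
Proof.
move=> h0; apply/(@cvgrPdist_lt _ _ _ (nbhs h0)) => e e_gt0.
have x1_gt0 : 0 < `|x| + 1 by rewrite ltr_wpDl.
near=> h.
have : `|h0 - h| < e / (`|x| + 1).
  by near: h; apply: cvgr_dist_lt => //; exact: divr_gt0.
rewrite ltr_pdivlMr // -ipBr => h_near.
apply: le_lt_trans (normr_ip_le _ _) _.
have := normr_ge0 (h0 - h); have := normr_ge0 x; nra.
Unshelve. all: by end_near.
Qed.

Lemma ip_continuous_l z : continuous (ip^~ z).
Proof. by under eq_fun do rewrite ipC; exact: ip_continuous. Qed.

Lemma parallelogram (p q : H) :
  `|p - q| ^+ 2 + `|p + q| ^+ 2 = 2 * `|p| ^+ 2 + 2 * `|q| ^+ 2.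
Proof. by rewrite sqr_normB sqr_normD; ring. Qed.

Lemma ip_eq0_of_min w s :
  (forall t : R, `|w| ^+ 2 <= `|w - t *: s| ^+ 2) -> ip w s = 0.
Proof.
move=> w_min.
set A := ip w s; set B := `|s| ^+ 2.
have B_ge0 : 0 <= B by exact: exprn_ge0.
set t := A / (B + 1).
have A_t : A = t * (B + 1) by rewrite /t mulfVK // gt_eqF // ltr_wpDl.
have := w_min t.
rewrite sqr_normB ipZr normrZ exprMn real_normK ?num_real // -/A -/B A_t.
have t2_ge0 : 0 <= t ^+ 2 by exact: sqr_ge0.
move=> min_t; have : t ^+ 2 == 0 by rewrite eq_le t2_ge0 andbT; nra.
by rewrite sqrf_eq0 => /eqP->; rewrite mul0r.
Qed.

End InnerProduct.

Section Projection.
Variables (R : realType) (H : completeNormedModType R) (ip : H -> H -> R).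
Hypothesis ip_hilbert : hilbert_inner ip.
Variables (S : set H) (y : H).
Hypothesis S_subspace : lin_subspace S.

Let dists := [set `|y - s| ^+ 2 | s in S].
Let d := inf dists.

Let dists_has_inf : has_inf dists.
Proof.
split; first by exists (`|y - 0| ^+ 2), 0; first exact: S_subspace.1.
by exists 0 => _ [? _ <-]; exact: exprn_ge0.
Qed.

Let inf_dist_le s : S s -> d <= `|y - s| ^+ 2.
Proof. by move=> Ss; apply: ge_inf dists_has_inf.2 _ _; exists s. Qed.

Let near_inf_dist n : exists s, S s /\ `|y - s| ^+ 2 < d + n.+1%:R^-1.
Proof.
have n1_gt0 : 0 < n.+1%:R^-1 :> R by rewrite invr_gt0 ltr0Sn.
by have [_ [s Ss <-]] := inf_adherent n1_gt0 dists_has_inf; exists s.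
Qed.

Let near_inf_dist_close x z a b : S x -> S z ->
  `|y - x| ^+ 2 <= d + a -> `|y - z| ^+ 2 <= d + b ->
  `|x - z| ^+ 2 <= 2 * a + 2 * b.
Proof.
move=> Sx Sz x_le z_le.
have S_mid : S (2^-1 *: (x + z)).
  have [S0 S_lin] := S_subspace; rewrite -[_ *: _]addr0 -[x]scale1r.
  by apply: (S_lin) => //; exact: S_lin.
have := parallelogram ip_hilbert (y - z) (y - x).
have -> : y - z - (y - x) = x - z by rewrite opprB addrC addrA subrK.
have -> : y - z + (y - x) = 2 *: (y - 2^-1 *: (x + z)).
  rewrite scalerBr scalerA mulfV ?pnatr_eq0 // scale1r scaler_nat mulr2n.
  by rewrite opprD addrACA [- z + _]addrC.
rewrite normrZ exprMn ger0_norm // (expr2 2).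
have := inf_dist_le S_mid; lra.
Qed.

Let minimizing_cvg (u : nat -> H) : (forall n, S (u n)) ->
  (forall n, `|y - u n| ^+ 2 < d + n.+1%:R^-1) -> cvg (u @ \oo).
Proof.
move=> Su u_min; apply/cauchy_cvgP/cauchy_exP => e e_gt0.
have e4_gt0 : 0 < e ^+ 2 / 4 by rewrite divr_gt0 // exprn_gt0.
have small := near_infty_natSinv_lt (PosNum e4_gt0).
near \oo => N; exists (u N).
change (\forall n \near \oo, ball (u N) e (u n)); near=> n; rewrite -ball_normE /=.
have N_small : N.+1%:R^-1 < e ^+ 2 / 4 by near: N; exact: small.
have n_small : n.+1%:R^-1 < e ^+ 2 / 4 by near: n; exact: small.
have : `|u N - u n| ^+ 2 < e ^+ 2.
  have := near_inf_dist_close (Su N) (Su n) (ltW (u_min N)) (ltW (u_min n)).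
  move: N.+1%:R^-1 n.+1%:R^-1 N_small n_small => a b; lra.
have := normr_ge0 (u N - u n); rewrite !expr2; nra.
Unshelve. all: by end_near.
Qed.

Lemma orthogonal_projection :
  exists2 m, closure S m & forall s, S s -> ip (y - m) s = 0.
Proof.
have /choice[u u_min] := near_inf_dist.
have Su n : S (u n) by have [] := u_min n.
have u_dist n : `|y - u n| ^+ 2 < d + n.+1%:R^-1 by have [] := u_min n.
have u_m : u @ \oo --> lim (u @ \oo) by exact: minimizing_cvg.
set m := lim _ in u_m.
have m_min : `|y - m| ^+ 2 <= d.
  apply/ler_addgt0Pr => e e_gt0.
  apply: (cvgr_to_le (cvg_sqr_norm (cvgB (cvg_cst y) u_m))).
  near=> n; apply: (le_trans (ltW (u_dist n))); rewrite lerD2l.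
  by apply: ltW; near: n; exact: near_infty_natSinv_lt (PosNum e_gt0).
exists m.
  apply: closed_cvg u_m; first exact: closed_closure.
  by apply: nearW => n; exact: subset_closure.
move=> s Ss; apply: ip_eq0_of_min => // t.
apply: le_trans m_min _.
have -> : y - m - t *: s = y - (t *: s + m) by rewrite opprD addrA addrAC.
apply: (cvgr_to_ge (cvg_sqr_norm (cvgB (cvg_cst y) (cvgD (cvg_cst (t *: s)) u_m)))).
apply: nearW => n.
by apply: inf_dist_le; apply: S_subspace.2.
Unshelve. all: by end_near.
Qed.

End Projection.

Lemma riesz_representation (R : realType) (H : completeNormedModType R)
    (ip : H -> H -> R) :
  hilbert_inner ip -> forall L : H -> R, lin_fun L -> continuous L ->
  exists d, forall z, ip d z = L z.
Proof.
move=> ip_hilbert L L_lin L_cont.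
have [L0|/existsNP[z /eqP Lz_neq0]] := pselect (forall z, L z = 0).
  by exists 0 => z; rewrite (ip0l ip_hilbert) L0.
set K := [set k | L k = 0].
have K_subspace : lin_subspace K.
  split=> [|a x y Kx Ky]; first exact: lin_fun0 L_lin.
  by rewrite /K /= L_lin Kx Ky mulr0 addr0.
have [m m_cl m_orth] := orthogonal_projection ip_hilbert z K_subspace.
have Lm : L m = 0.
  by apply: (closure_sub_preimage L_cont (@closed_eq _ 0) _ m_cl) => _ [k Kk <-].
set z0 := z - m.
have Lz0 : L z0 = L z by rewrite /z0 (lin_funB L_lin) Lm subr0.
have z0z0_neq0 : ip z0 z0 != 0.
  rewrite (ipxx_eq0 ip_hilbert); apply: contra Lz_neq0 => /eqP z0_eq0.
  by rewrite -Lz0 z0_eq0 (lin_fun0 L_lin).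
exists ((L z0 / ip z0 z0) *: z0) => ut.
have K_ut : K (ut - (L ut / L z0) *: z0).
  by rewrite /K /= (lin_funB L_lin) (lin_funZ L_lin) mulfVK ?subrr ?Lz0.
have := m_orth _ K_ut; rewrite -/z0 (ipBr ip_hilbert) (ipZr ip_hilbert).
move/eqP; rewrite subr_eq0 => /eqP z0_ut.
rewrite (ipZl ip_hilbert) z0_ut.
by field; rewrite z0z0_neq0 Lz0 Lz_neq0.
Qed.

Section BarreledContinuity.
Variables (R : realType) (X : topologicalLmodType R).

Lemma scale_sub_continuous (k : R) (v0 : X) :
  continuous (fun v : X => k *: (v - v0)).
Proof.
move=> x.
have sub_v0 : (fun v => v - v0) @ x --> x - v0.
  apply: (@continuous_comp X (X * X)%type X (fun v => (v, v0)) (fun z => z.1 - z.2)).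
    exact: (cvg_pair cvg_id (cvg_cst v0)).
  exact: sub_continuous.
apply: (@continuous_comp X (R^o * X)%type X (fun v => (k, v - v0))
  (fun z => z.1 *: z.2)).
  exact: (cvg_pair (cvg_cst (k : R^o)) sub_v0).
exact: scale_continuous.
Qed.

Lemma lin_fun_continuous_of_bounded (u : X -> R) (C : set X) : lin_fun u ->
  nbhs 0 C -> (forall b, C b -> `|u b| <= 1) -> continuous u.
Proof.
move=> u_lin C0 u_C v0; apply/(@cvgrPdist_lt _ _ _ (nbhs v0)) => e e_gt0.
set k := 2 / e.
have k_gt0 : 0 < k by rewrite divr_gt0.
have : nbhs v0 ((fun v => k *: (v - v0)) @^-1` C).
  have := @scale_sub_continuous k v0 v0.
  by rewrite /continuous_at subrr scaler0; apply.
apply: filterS => v /u_C.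
rewrite (lin_funZ u_lin) (lin_funB u_lin) normrM (gtr0_norm k_gt0) distrC.
rewrite /k mulrAC ler_pdivrMr // mul1r => u_le.
have := normr_ge0 (u v - u v0); lra.
Qed.

End BarreledContinuity.

Section WeakContinuity.
Variables (R : realType) (X : topologicalLmodType R)
  (H : completeNormedModType R) (ip : H -> H -> R) (iota : X -> H).
Hypotheses (X_barreled : barreled X) (ip_hilbert : hilbert_inner ip).
Hypothesis iota_lin :
  forall (a : R) x y, iota (a *: x + y) = a *: iota x + iota y.
Hypothesis iota_dense : closure (range iota) = setT.
Hypothesis iota_ip_continuous :
  forall w, continuous (fun v => ip (iota v) (iota w)).

Lemma ip_iota_lin ut : lin_fun (fun v => ip (iota v) ut).
Proof. by move=> a x y; rewrite /= iota_lin (ip_lin_l ip_hilbert). Qed.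

Definition polar_ball (ut : H) : set X :=
  [set v | forall w, `|ut - iota w| < 1 -> `|ip (iota v) (iota w)| <= 1].

Lemma polar_ball_barrel ut : barrel (polar_ball ut).
Proof.
have ipZ w := lin_funZ (ip_iota_lin (iota w)).
split.
- move=> x x_cl w w_near.
  have norm_cont : continuous (fun v => `|ip (iota v) (iota w)|).
    move=> v.
    apply: (@continuous_comp _ _ _ (fun v => ip (iota v) (iota w)) Num.norm v).
      exact: iota_ip_continuous.
    exact: norm_continuous.
  apply: (closure_sub_preimage norm_cont (@closed_le _ 1) _ x_cl).
  by move=> _ [b Bb <-]; exact: Bb.
- move=> x y t Bx By /andP[t_ge0 t_le1] w w_near.
  rewrite /= (ip_iota_lin (iota w)) ipZ.
  move: (Bx w w_near) (By w w_near); rewrite !ler_norml => /andP[? ?] /andP[? ?].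
  by apply/andP; split; nra.
- move=> x a Bx a_le1 w w_near; rewrite ipZ normrM.
  by rewrite -[1]mul1r ler_pM // (Bx w w_near).
- move=> x; set c := `|iota x| * (`|ut| + 1).
  have c1_gt0 : 0 < c + 1 by rewrite ltr_wpDl // mulr_ge0 // addr_ge0.
  exists (c + 1)^-1; first by rewrite invr_gt0.
  move=> t t_le w w_near; rewrite ipZ normrM.
  have iota_w_le : `|iota w| <= `|ut| + 1.
    by rewrite -[iota w](subKr ut) (le_trans (ler_normB _ _)) // lerD2l ltW.
  have ip_le : `|ip (iota x) (iota w)| <= c.
    by apply: le_trans (normr_ip_le ip_hilbert _ _) _; rewrite ler_wpM2l.
  apply: le_trans (ler_pM _ _ t_le ip_le) _ => //.
  by rewrite mulrC ler_pdivrMr // mul1r lerDl.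
Qed.

Lemma polar_ball_ip_iota_le1 ut b : polar_ball ut b -> `|ip (iota b) ut| <= 1.
Proof.
move=> Bb.
have ut_cl : closure (iota @` [set w | `|ut - iota w| < 1]) ut.
  move=> N N_ut; have : closure (range iota) ut by rewrite iota_dense.
  move/(_ _ (filterI N_ut (nbhsx_ballx ut 1 ltr01))) => [_ [[w _ <-] [Nw]]].
  by rewrite -ball_normE => ut_w; exists (iota w); split=> //; exists w.
have norm_cont : continuous (fun h => `|ip (iota b) h|).
  move=> h; apply: (@continuous_comp _ _ _ (ip (iota b)) Num.norm h).
    exact: ip_continuous.
  exact: norm_continuous.
apply: (closure_sub_preimage norm_cont (@closed_le _ 1) _ ut_cl).
by move=> _ [_ [w w_near <-] <-]; exact: Bb.
Qed.

Lemma ip_iota_dual ut : in_dual (fun v => ip (iota v) ut).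
Proof.
split; first exact: ip_iota_lin.
apply: (lin_fun_continuous_of_bounded (ip_iota_lin ut)).
  exact: X_barreled (polar_ball_barrel ut).
exact: polar_ball_ip_iota_le1.
Qed.

End WeakContinuity.

Section BoundaryAdjoint.
Variables (R : realType) (X Xbd : topologicalLmodType R) (Xbulk : set X)
  (dd : (X -> R) -> (Xbd -> R)) (H : completeNormedModType R)
  (ip : H -> H -> R) (iota : X -> H).
Hypothesis ip_hilbert : hilbert_inner ip.
Hypothesis ip_iota_dual : forall ut, in_dual (fun v => ip (iota v) ut).
Hypothesis dd_dual : forall u, in_sub_dual Xbulk u -> in_dual (dd u).
Hypothesis dd_lin : forall (a : R) u v,
  in_sub_dual Xbulk u -> in_sub_dual Xbulk v ->
  dd (fun x => a * u x + v x) = (fun f => a * dd u f + dd v f).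
Hypothesis dd_cont : weakstar_continuous_on_dual dd.

Definition bd_functional (f : Xbd) (ut : H) := dd (fun v => ip (iota v) ut) f.

Definition bd_adjoint_range : set H :=
  [set d | exists f, forall ut, ip d ut = bd_functional f ut].

Let ip_iota_sub_dual ut : in_sub_dual Xbulk (fun v => ip (iota v) ut).
Proof.
have [ut_lin ut_cont] := ip_iota_dual ut.
by split=> [a x y _ _|]; [exact: ut_lin | exact: continuous_subspaceT].
Qed.

Lemma bd_functional_lin f : lin_fun (bd_functional f).
Proof.
move=> a x y; rewrite /bd_functional.
under eq_fun do rewrite (ipDr ip_hilbert) (ipZr ip_hilbert).
by rewrite (dd_lin a (ip_iota_sub_dual x) (ip_iota_sub_dual y)).
Qed.

Lemma bd_functional_continuous f : continuous (bd_functional f).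
Proof.
move=> ut0; apply/(@cvgrPdist_lt _ _ _ (nbhs ut0)) => e e_gt0.
have [F [del [del_gt0 dd_near]]] := dd_cont (ip_iota_dual ut0) [:: f] e_gt0.
have : \forall ut \near ut0, forall v, v \in F ->
    `|ip (iota v) ut - ip (iota v) ut0| < del.
  apply: near_forall_in => v _.
  have ip_v_cont := @ip_continuous _ _ _ ip_hilbert (iota v).
  apply: filterS (cvgr_dist_lt _ _ (ip_v_cont ut0) _ del_gt0) => ut.
  by rewrite distrC.
apply: filterS => ut ut_near; rewrite distrC.
exact: dd_near (ip_iota_dual ut) ut_near f (mem_head f [::]).
Qed.

Lemma bd_adjoint_exists f : exists d, forall ut, ip d ut = bd_functional f ut.
Proof.
apply: (riesz_representation ip_hilbert).
  exact: bd_functional_lin.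
exact: bd_functional_continuous.
Qed.

Lemma bd_adjoint_unique f : exists! d, forall ut, ip d ut = bd_functional f ut.
Proof.
have [d d_f] := bd_adjoint_exists f; exists d; split=> // d' d'_f.
by apply: (ip_inj ip_hilbert) => ut; rewrite d_f d'_f.
Qed.

Lemma bd_adjoint_range_subspace : lin_subspace bd_adjoint_range.
Proof.
have ddL ut := (dd_dual (ip_iota_sub_dual ut)).1.
split=> [|a x z [f1 x_f1] [f2 z_f2]].
  by exists 0 => ut; rewrite (ip0l ip_hilbert) /bd_functional (lin_fun0 (ddL ut)).
exists (a *: f1 + f2) => ut.
by rewrite (ip_lin_l ip_hilbert) x_f1 z_f2 /bd_functional (ddL ut).
Qed.

Lemma closure_bulk_sub_bd_adjoint_range :
  (forall u, in_dual u -> (forall f, dd u f = 0) ->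
     forall x, Xbulk x -> u x = 0) ->
  closure (iota @` Xbulk) `<=` closure bd_adjoint_range.
Proof.
move=> dd_injective y y_cl.
have [m m_cl m_orth] :=
  orthogonal_projection ip_hilbert y bd_adjoint_range_subspace.
set w := y - m.
have dd_w f : dd (fun v => ip (iota v) w) f = 0.
  have [d d_f] := bd_adjoint_exists f.
  by rewrite -[LHS]d_f (ipC ip_hilbert) m_orth //; exists f.
have w_bulk := dd_injective _ (ip_iota_dual w) dd_w.
have ip_w_cont := @ip_continuous_l _ _ _ ip_hilbert w.
have y_w : ip y w = 0.
  apply: (closure_sub_preimage ip_w_cont (@closed_eq _ 0) _ y_cl).
  by move=> _ [_ [x Xx <-] <-]; exact: w_bulk.
have m_w : ip m w = 0.
  apply: (closure_sub_preimage ip_w_cont (@closed_eq _ 0) _ m_cl).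
  by move=> _ [d d_range <-]; rewrite /= (ipC ip_hilbert) m_orth.
have /eqP : w = 0.
  by apply/eqP; rewrite -(ipxx_eq0 ip_hilbert) {1}/w (ipBl ip_hilbert) y_w m_w subrr.
by rewrite subr_eq0 => /eqP ->.
Qed.

End BoundaryAdjoint.

Theorem lemma2p1 (R : realType) (X Xbd : topologicalLmodType R)
  (sigma eta : X -> X -> R) (Xbulk : set X)
  (dd : (X -> R) -> (Xbd -> R))
  (H : completeNormedModType R) (ip : H -> H -> R) (iota : X -> H) :
  barreled X ->
  symplectic_form sigma ->
  lin_subspace Xbulk ->
  (* dd : Xbulk' -> Xbd', well defined on restrictions, linear *)
  (forall u v, in_sub_dual Xbulk u -> in_sub_dual Xbulk v ->
     (forall x, Xbulk x -> u x = v x) -> dd u = dd v) ->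
  (forall u, in_sub_dual Xbulk u -> in_dual (dd u)) ->
  (forall (a : R) u v, in_sub_dual Xbulk u -> in_sub_dual Xbulk v ->
     dd (fun x => a * u x + v x) = (fun f => a * dd u f + dd v f)) ->
  (* its restriction to X' is continuous X' -> Xbd' (weak* topologies) *)
  weakstar_continuous_on_dual dd ->
  (* eta : symmetric, bilinear, strictly positive, dominating sigma *)
  bilinear_form eta ->
  (forall v w, eta v w = eta w v) ->
  (forall v, v != 0 -> 0 < eta v v) ->
  (forall v1 v2, `|sigma v1 v2| <= Num.sqrt (eta v1 v1) * Num.sqrt (eta v2 v2)) ->
  (* Hilbert completion of (X, eta) *)
  is_completion eta ip iota ->
  (* Hypothesis 1 *)
  continuous_to_weakstar_dual (fun v : X => fun w : X => eta w v) ->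
  (* (i) *)
  ((forall ut : H, in_dual (fun v : X => ip (iota v) ut)) /\
   (forall f : Xbd,
      lin_fun (fun ut : H => dd (fun v => ip (iota v) ut) f) /\
      continuous (fun ut : H => dd (fun v => ip (iota v) ut) f)) /\
   (forall f : Xbd, exists! d : H,
      forall ut : H, ip d ut = dd (fun v => ip (iota v) ut) f)) /\
  (* (ii) under Hypothesis 2 *)
  ((forall u, in_dual u -> (forall f, dd u f = 0) ->
      forall x, Xbulk x -> u x = 0) ->
   closure (iota @` Xbulk) `<=`
   closure [set d : H | exists f : Xbd,
              forall ut : H, ip d ut = dd (fun v => ip (iota v) ut) f]).
Proof.
move=> X_barreled _ _ _ dd_dual dd_lin dd_cont _ _ _ _
  [ip_hilbert iota_lin iota_eta iota_dense] [eta_dual _].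
have iota_ip_cont w : continuous (fun v => ip (iota v) (iota w)).
  by rewrite (funext (iota_eta ^~ w)); exact: (eta_dual w).2.
have ut_dual := ip_iota_dual X_barreled ip_hilbert iota_lin iota_dense iota_ip_cont.
split; first split; [exact: ut_dual | split | ].
- move=> f; split; first exact: (bd_functional_lin ip_hilbert ut_dual dd_lin).
  exact: (bd_functional_continuous ip_hilbert ut_dual dd_cont).
- exact: (bd_adjoint_unique ip_hilbert ut_dual dd_lin dd_cont).
- exact: (closure_bulk_sub_bd_adjoint_range
    ip_hilbert ut_dual dd_dual dd_lin dd_cont).
Qed.
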